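(* Let $S=\mathbb{Z}^2\setminus 2\mathbb{Z}^2$ (the decorated lattice) with its set $L$ of nearest-neighbour edges (pairs $\{i,j\}\subset S$ with $\|i-j\|_2=1$). Consider the $XY$ model on $S$ with spins $\sigma_i\in\mathbb{S}^1$ (angles $\theta_i$) and formal Hamiltonian $$H(\sigma)=-\sum_{\{i,j\}\in L}J\langle\sigma_i,\sigma_j\rangle-\sum_{i\in S}h_i\langle\sigma_i,e_2\rangle=-\sum_{\{i,j\}\in L}J\cos(\theta_i-\theta_j)-\sum_{i\in S}h_i\sin\theta_i,$$ with $J>0$, where the field is $h_i=\sum_{j\in 2\mathbb{Z}^2,\ \|i-j\|_2=1} s_{j/2}$ and, for $(a,b)\in\mathbb{Z}^2$, $s_{(a,b)}=(-1)^{\lfloor a/2\rfloor+\lfloor b/2\rfloor}$ (so $h_i\in\{2,0,-2\}$: $+2$ between two North-prescribed even sites, $-2$ between two South-prescribed ones, $0$ otherwise). Then this model displays a spin-flop transition at zero temperature in the East–West direction: there exist two distinct ground states $\theta^{ME}$ and $\theta^{MW}$ whose horizontal spin components are opposite and nonzero, $\sigma^{(1)}(\theta^{ME})=-\sigma^{(1)}(\theta^{MW})\neq 0$.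
   Context: $e_1,e_2$ is the canonical basis of $\mathbb{R}^2$; $\sigma^{(1)}=\langle\sigma,e_1\rangle=\cos\theta$ is the horizontal (East–West) component of a spin. The field $h$ comes from freezing the spins at sites $2k$, $k\in\mathbb{Z}^2$, to North ($s_k=+1$) or South ($s_k=-1$) according to the doubly alternating pattern. A ground state is a configuration on $S$ of minimal energy (no finite modification lowers the energy). $\theta^{ME}$ (''mostly East'') is periodic, taking values NE, E, SE; $\theta^{MW}$ (''mostly West'') is its mirror image NW, W, SW under $\theta\mapsto\pi-\theta$. *)

From Stdlib Require Import Reals ZArith List.
Open Scope R_scope.

Definition site := (Z * Z)%type.

Definition in_even (p : site) : bool := (Z.even (fst p) && Z.even (snd p))%bool.
Definition inSb (p : site) : bool := negb (in_even p).
Definition inS (p : site) : Prop := inSb p = true.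

(* s_(a,b) = (-1)^(floor(a/2) + floor(b/2))  (Z.div floors) *)
Definition s_pat (q : site) : R :=
  if Z.even (Z.div (fst q) 2 + Z.div (snd q) 2) then 1 else -1.

Definition even_contrib (j : site) : R :=
  if in_even j then s_pat (Z.div (fst j) 2, Z.div (snd j) 2) else 0.

Definition hfield (i : site) : R :=
  even_contrib ((fst i + 1)%Z, snd i) + even_contrib ((fst i - 1)%Z, snd i)
  + even_contrib (fst i, (snd i + 1)%Z) + even_contrib (fst i, (snd i - 1)%Z).

Definition zrange (a b : Z) : list Z :=
  map (fun k => (a + Z.of_nat k)%Z) (seq 0 (Z.to_nat (b - a + 1))).

Definition rsum {A : Type} (l : list A) (f : A -> R) : R :=
  fold_right (fun x acc => f x + acc) 0 l.

(* a configuration is an angle at each site (values on 2Z^2 are irrelevant) *)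
Definition config := site -> R.

Definition bond (J : R) (th : config) (i j : site) : R :=
  if (inSb i && inSb j)%bool then - J * cos (th i - th j) else 0.

Definition site_energy (th : config) (i : site) : R :=
  if inSb i then - hfield i * sin (th i) else 0.

Definition in_box (n : nat) (p : site) : Prop :=
  (- Z.of_nat n <= fst p <= Z.of_nat n)%Z /\ (- Z.of_nat n <= snd p <= Z.of_nat n)%Z.

(* Energy of all nearest-neighbour edges of S having at least one endpoint in
   the box [-n,n]^2 (each edge counted once, plus possibly some edges outside
   the box, which do not matter for comparisons between configurations that
   agree outside the box), and of all field terms in the box. *)
Definition H_box (J : R) (n : nat) (th : config) : R :=
  let N := Z.of_nat n in
  rsum (zrange (- N - 1) N) (fun a => rsum (zrange (- N - 1) N) (fun b =>
     bond J th (a, b) ((a + 1)%Z, b) + bond J th (a, b) (a, (b + 1)%Z)))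
  + rsum (zrange (- N) N) (fun a => rsum (zrange (- N) N) (fun b =>
     site_energy th (a, b))).

(* Ground state: no finite modification (on S) lowers the energy. Every finite
   modification is supported in some box [-n,n]^2. *)
Definition ground_state (J : R) (th : config) : Prop :=
  forall (n : nat) (th' : config),
    (forall p, inS p -> ~ in_box n p -> th' p = th p) ->
    H_box J n th <= H_box J n th'.

(* Every bond of the decorated lattice joins an edge site (exactly one even coordinate) to a
   centre (both coordinates odd), and only edge sites feel a field: h = +-2 on the four arms of
   the plus-shaped cluster around the centre of each 4x4 block (the sign being the pole
   prescribed around that block), 0 elsewhere.  The mostly-East configuration tilts each such
   cluster by +-d, where tan d = 2/J, and points every other spin East.

   An edge site i with field 2s has its cluster centre on one side and an outer centre o on the
   other.  The outer centre sees exactly two field-carrying edge sites, with opposite fields, so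
   attaching 2 s cos d sin(theta_o) to i costs nothing in total.  After this gauge the energy
   splits into bonds -J cos(theta_i - theta_c) >= -J and pairs
     -J cos(theta_i - theta_o) - 2 s sin(theta_i) + 2 s cos d sin(theta_o) >= -(J cos d + 2 sin d),
   the latter by a sum-of-squares identity, and the mostly-East configuration attains every
   bound.  On a box the pieces are grouped into cells (a site with its right and upper bonds),
   the gauge terms telescope, and the cell inequality is checked on the 64 residues modulo the
   period 8.  The mostly-West configuration is the mirror image theta -> pi - theta, which
   preserves the energy and flips the horizontal spin components. *)

From Stdlib Require Import Reals ZArith Lra Lia List Rtrigo_facts.
Open Scope R_scope.

Lemma rsum_cons {A} (x : A) l f : rsum (x :: l) f = f x + rsum l f.
Proof. reflexivity. Qed.

Lemma rsum_ext {A} (l : list A) f g : (forall x, f x = g x) -> rsum l f = rsum l g.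
Proof. intros H; induction l as [|x l IH]; simpl; [reflexivity|]. rewrite H, IH. reflexivity. Qed.

Lemma rsum_add {A} (l : list A) f g : rsum l (fun x => f x + g x) = rsum l f + rsum l g.
Proof. induction l as [|x l IH]; simpl; [ring|]. rewrite IH. ring. Qed.

Lemma rsum_sub {A} (l : list A) f g : rsum l (fun x => f x - g x) = rsum l f - rsum l g.
Proof. induction l as [|x l IH]; simpl; [ring|]. rewrite IH. ring. Qed.

Lemma rsum_le {A} (l : list A) f g : (forall x, f x <= g x) -> rsum l f <= rsum l g.
Proof. intros H; induction l as [|x l IH]; simpl; [lra|]. specialize (H x). lra. Qed.

Lemma zrange_cons a b : (a <= b)%Z -> zrange a b = a :: zrange (a + 1) b.
Proof.
  intros Hab. unfold zrange.
  replace (Z.to_nat (b - a + 1)) with (S (Z.to_nat (b - (a + 1) + 1))) by lia.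
  simpl. rewrite Z.add_0_r. f_equal.
  rewrite <- seq_shift, map_map. apply map_ext. intros k. lia.
Qed.

Lemma rsum_telescope (F : Z -> R) a b : (a <= b + 1)%Z ->
  rsum (zrange a b) (fun x => F x - F (x + 1)%Z) = F a - F (b + 1)%Z.
Proof.
  intros Hab. remember (Z.to_nat (b - a + 1)) as m eqn:Hm.
  revert a Hab Hm. induction m as [|m IH]; intros a Hab Hm.
  - unfold zrange. rewrite <- Hm. simpl. replace (b + 1)%Z with a by lia. ring.
  - rewrite zrange_cons by lia. rewrite rsum_cons, IH by lia. ring.
Qed.

Definition gauge (gam : site -> R) (th : config) (p : site) : R :=
  if inSb p then gam p * sin (th p) else 0.

Definition cell_energy (J : R) (gx gy : site -> R) (th : config) (a b : Z) : R :=
  (bond J th (a, b) ((a + 1)%Z, b) + bond J th (a, b) (a, (b + 1)%Z)) + site_energy th (a, b)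
  + (gauge gx th (a, b) - gauge gx th ((a + 1)%Z, b))
  + (gauge gy th (a, b) - gauge gy th (a, (b + 1)%Z)).

Definition frame_energy (gx gy : site -> R) (n : nat) (th : config) : R :=
  let N := Z.of_nat n in
  let R1 := zrange (- N - 1) N in
  rsum R1 (fun b => site_energy th ((- N - 1)%Z, b))
  + rsum (zrange (- N) N) (fun a => site_energy th (a, (- N - 1)%Z))
  + (rsum R1 (fun b => gauge gx th ((- N - 1)%Z, b)) - rsum R1 (fun b => gauge gx th ((N + 1)%Z, b)))
  + rsum R1 (fun a => gauge gy th (a, (- N - 1)%Z) - gauge gy th (a, (N + 1)%Z)).

Lemma cell_sum_H_box J gx gy n th :
  let R1 := zrange (- Z.of_nat n - 1) (Z.of_nat n) in
  rsum R1 (fun a => rsum R1 (fun b => cell_energy J gx gy th a b))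
  = H_box J n th + frame_energy gx gy n th.
Proof.
  unfold H_box, frame_energy. set (N := Z.of_nat n).
  set (R1 := zrange (- N - 1) N). set (R0 := zrange (- N) N).
  assert (HR1 : R1 = (- N - 1)%Z :: R0).
  { unfold R1, R0. rewrite zrange_cons by lia. do 2 f_equal. lia. }
  assert (Hinner : forall a, rsum R1 (fun b => cell_energy J gx gy th a b)
    = rsum R1 (fun b => bond J th (a, b) ((a + 1)%Z, b) + bond J th (a, b) (a, (b + 1)%Z))
      + rsum R1 (fun b => site_energy th (a, b))
      + (rsum R1 (fun b => gauge gx th (a, b)) - rsum R1 (fun b => gauge gx th ((a + 1)%Z, b)))
      + (gauge gy th (a, (- N - 1)%Z) - gauge gy th (a, (N + 1)%Z))).
  { intros a. unfold cell_energy, R1.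
    rewrite !rsum_add, (rsum_telescope (fun b => gauge gy th (a, b))), rsum_sub by lia.
    reflexivity. }
  assert (Hsite : rsum R1 (fun a => rsum R1 (fun b => site_energy th (a, b)))
    = rsum R0 (fun a => rsum R0 (fun b => site_energy th (a, b)))
      + rsum R1 (fun b => site_energy th ((- N - 1)%Z, b))
      + rsum R0 (fun a => site_energy th (a, (- N - 1)%Z))).
  { rewrite HR1 at 1. rewrite rsum_cons.
    rewrite (rsum_ext R0 _ (fun a => site_energy th (a, (- N - 1)%Z) + rsum R0 (fun b => site_energy th (a, b))))
      by (intros; rewrite HR1; reflexivity).
    rewrite rsum_add. ring. }
  rewrite (rsum_ext R1 _ _ Hinner), !rsum_add, Hsite.
  pose proof (rsum_telescope (fun a => rsum R1 (fun b => gauge gx th (a, b))) (- N - 1) N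
    ltac:(lia)) as Htel.
  fold R1 in Htel. cbv beta in Htel. rewrite Htel.
  ring.
Qed.

Lemma frame_energy_local gx gy n th th' :
  (forall p, inS p -> ~ in_box n p -> th' p = th p) ->
  frame_energy gx gy n th' = frame_energy gx gy n th.
Proof.
  intros Hagree.
  assert (Hframe : forall a b, ((a = - Z.of_nat n - 1) \/ (a = Z.of_nat n + 1)
      \/ (b = - Z.of_nat n - 1) \/ (b = Z.of_nat n + 1))%Z -> ~ in_box n (a, b)).
  { unfold in_box. simpl. lia. }
  assert (Hsite : forall p, ~ in_box n p -> site_energy th' p = site_energy th p).
  { intros p Hp. unfold site_energy. destruct (inSb p) eqn:HS; [now rewrite Hagree|reflexivity]. }
  assert (Hgauge : forall gam p, ~ in_box n p -> gauge gam th' p = gauge gam th p).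
  { intros gam p Hp. unfold gauge. destruct (inSb p) eqn:HS; [now rewrite Hagree|reflexivity]. }
  unfold frame_energy.
  repeat match goal with
  | |- rsum _ _ = rsum _ _ => apply rsum_ext; intros
  | |- Rplus _ _ = Rplus _ _ => f_equal
  | |- Rminus _ _ = Rminus _ _ => f_equal
  end.
  all: first [apply Hsite | apply Hgauge]; apply Hframe; lia.
Qed.

Lemma ground_state_of_cell_min J gx gy th0 :
  (forall th a b, cell_energy J gx gy th0 a b <= cell_energy J gx gy th a b) ->
  ground_state J th0.
Proof.
  intros Hmin n th Hagree.
  pose proof (cell_sum_H_box J gx gy n th0) as E0. pose proof (cell_sum_H_box J gx gy n th) as E.
  rewrite (frame_energy_local gx gy n th0 th Hagree) in E. simpl in E0, E.
  assert (Hle : forall l, rsum l (fun a => rsum l (fun b => cell_energy J gx gy th0 a b))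
    <= rsum l (fun a => rsum l (fun b => cell_energy J gx gy th a b))).
  { intros l. apply rsum_le. intros a. apply rsum_le. intros b. apply Hmin. }
  specialize (Hle (zrange (- Z.of_nat n - 1) (Z.of_nat n))).
  lra.
Qed.

Definition mirror (th : config) : config := fun p => PI - th p.

Lemma H_box_mirror J n th : H_box J n (mirror th) = H_box J n th.
Proof.
  assert (Hcos : forall u v, cos (PI - u - (PI - v)) = cos (u - v)).
  { intros u v. replace (PI - u - (PI - v)) with (- (u - v)) by ring. apply cos_neg. }
  unfold H_box. f_equal; apply rsum_ext; intros a; apply rsum_ext; intros b;
    unfold bond, site_energy, mirror; now rewrite ?Hcos, ?sin_PI_x.
Qed.

Lemma ground_state_mirror J th : ground_state J th -> ground_state J (mirror th).
Proof.
  intros Hgs n th' Hagree. rewrite H_box_mirror, <- (H_box_mirror J n th').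
  apply Hgs. intros p Hp Hout. unfold mirror. rewrite (Hagree p Hp Hout). unfold mirror. ring.
Qed.

Lemma tilt_angle_spec (J : R) : 0 < J -> exists d, 0 < cos d /\ J * sin d = 2 * cos d.
Proof.
  intros HJ. pose proof (tan_atan (2 / J)) as Ht.
  set (d := atan (2 / J)) in *. exists d.
  assert (Hc : 0 < cos d).
  { unfold d. rewrite cos_atan. apply Rdiv_lt_0_compat; [lra|].
    apply sqrt_lt_R0. pose proof (Rle_0_sqr (2 / J)). lra. }
  split; [exact Hc|].
  unfold tan in Ht. replace (sin d) with (sin d / cos d * cos d) by (field; lra).
  rewrite Ht. field. lra.
Qed.

Definition flop_cluster (p : site) : bool :=
  let r := (fst p mod 4)%Z in
  let r' := (snd p mod 4)%Z in
  ((r =? 1)%Z && (r' <=? 2)%Z || (r' =? 1)%Z && (r <=? 2)%Z)%bool.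

(* [fst p / 4 + snd p / 4] is the parity of the 4x4 block of [p], which fixes the poles
   prescribed around that block. *)
Definition mostly_east (d : R) : config := fun p =>
  if flop_cluster p then (if Z.even (fst p / 4 + snd p / 4) then d else - d) else 0.

(* Edge sites with first coordinate 0 mod 4 have their outer centre on the left, at 3 mod 4.
   The first branch hands the field term of such an edge site i to the cell of that centre o;
   the second puts c h_i sin(theta_o) in the cell of o and, as h_(o - e1) = - h_i, the matching
   term in the cell of the edge site o - e1.  [gauge_y] is the same in the vertical direction. *)
Definition gauge_x (c : R) (p : site) : R :=
  if (fst p mod 4 =? 0)%Z then hfield p
  else if (fst p mod 4 =? 3)%Z then c * hfield ((fst p + 1)%Z, snd p) else 0.

Definition gauge_y (c : R) (p : site) : R :=
  if (snd p mod 4 =? 0)%Z then hfield p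
  else if (snd p mod 4 =? 3)%Z then c * hfield (fst p, (snd p + 1)%Z) else 0.

Definition periodic8 {A} (F : site -> A) : Prop :=
  forall a b k l, F ((a + 8 * k)%Z, (b + 8 * l)%Z) = F (a, b).

Lemma Z_even_add_double x m : Z.even (x + 2 * m) = Z.even x.
Proof. rewrite Z.even_add, Z.even_mul. now destruct (Z.even x). Qed.

Lemma Z_div_add_mul x k m : m <> 0%Z -> ((x + m * k) / m = x / m + k)%Z.
Proof. intros Hm. rewrite Z.mul_comm. now apply Z.div_add. Qed.

Lemma Z_even_add_8 x k : Z.even (x + 8 * k) = Z.even x.
Proof. replace (8 * k)%Z with (2 * (4 * k))%Z by ring. apply Z_even_add_double. Qed.

Lemma Z_div2_add_8 x k : ((x + 8 * k) / 2 = x / 2 + 4 * k)%Z.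
Proof. replace (8 * k)%Z with (2 * (4 * k))%Z by ring. now apply Z_div_add_mul. Qed.

Lemma Z_div4_add_8 x k : ((x + 8 * k) / 4 = x / 4 + 2 * k)%Z.
Proof. replace (8 * k)%Z with (4 * (2 * k))%Z by ring. now apply Z_div_add_mul. Qed.

Lemma Z_mod4_add_8 x k : ((x + 8 * k) mod 4 = x mod 4)%Z.
Proof. replace (8 * k)%Z with ((2 * k) * 4)%Z by ring. now apply Z.mod_add. Qed.

Lemma periodic_inSb : periodic8 inSb.
Proof. intros a b k l. unfold inSb, in_even. cbn [fst snd]. now rewrite !Z_even_add_8. Qed.

Lemma periodic_even_contrib : periodic8 even_contrib.
Proof.
  intros a b k l. unfold even_contrib, in_even, s_pat. cbn [fst snd]. rewrite !Z_even_add_8.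
  rewrite !Z_div2_add_8.
  replace (4 * k)%Z with (2 * (2 * k))%Z by ring.
  replace (4 * l)%Z with (2 * (2 * l))%Z by ring.
  rewrite !Z_div_add_mul by lia.
  replace (a / 2 / 2 + 2 * k + (b / 2 / 2 + 2 * l))%Z
    with (a / 2 / 2 + b / 2 / 2 + 2 * (k + l))%Z by ring.
  now rewrite Z_even_add_double.
Qed.

Lemma periodic_hfield : periodic8 hfield.
Proof.
  intros a b k l. unfold hfield. cbn [fst snd].
  replace (a + 8 * k + 1)%Z with (a + 1 + 8 * k)%Z by ring.
  replace (a + 8 * k - 1)%Z with (a - 1 + 8 * k)%Z by ring.
  replace (b + 8 * l + 1)%Z with (b + 1 + 8 * l)%Z by ring.
  replace (b + 8 * l - 1)%Z with (b - 1 + 8 * l)%Z by ring.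
  now rewrite !periodic_even_contrib.
Qed.

Lemma periodic_gauge_x c : periodic8 (gauge_x c).
Proof.
  intros a b k l. unfold gauge_x. cbn [fst snd]. rewrite Z_mod4_add_8.
  replace (a + 8 * k + 1)%Z with (a + 1 + 8 * k)%Z by ring.
  now rewrite !periodic_hfield.
Qed.

Lemma periodic_gauge_y c : periodic8 (gauge_y c).
Proof.
  intros a b k l. unfold gauge_y. cbn [fst snd]. rewrite Z_mod4_add_8.
  replace (b + 8 * l + 1)%Z with (b + 1 + 8 * l)%Z by ring.
  now rewrite !periodic_hfield.
Qed.

Lemma periodic_mostly_east d : periodic8 (mostly_east d).
Proof.
  intros a b k l. unfold mostly_east, flop_cluster. cbn [fst snd]. rewrite !Z_mod4_add_8, !Z_div4_add_8.
  replace (a / 4 + 2 * k + (b / 4 + 2 * l))%Z with (a / 4 + b / 4 + 2 * (k + l))%Z by ring.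
  now rewrite Z_even_add_double.
Qed.

Lemma cell_energy_periodic J gx gy th th' a b k l :
  periodic8 gx -> periodic8 gy -> (forall x y, th' (x, y) = th ((x + 8 * k)%Z, (y + 8 * l)%Z)) ->
  cell_energy J gx gy th (a + 8 * k) (b + 8 * l) = cell_energy J gx gy th' a b.
Proof.
  intros Hgx Hgy Hth. unfold cell_energy, bond, site_energy, gauge.
  replace (a + 8 * k + 1)%Z with (a + 1 + 8 * k)%Z by ring.
  replace (b + 8 * l + 1)%Z with (b + 1 + 8 * l)%Z by ring.
  now rewrite !periodic_inSb, !periodic_hfield, !Hgx, !Hgy, <- !Hth.
Qed.

Lemma Z_lt8_cases r : (0 <= r < 8)%Z ->
  r = 0%Z \/ r = 1%Z \/ r = 2%Z \/ r = 3%Z \/ r = 4%Z \/ r = 5%Z \/ r = 6%Z \/ r = 7%Z.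
Proof. lia. Qed.

Section Tilt.
Variables (J d : R).
Hypothesis HJ : 0 < J.
Hypothesis Hcos : 0 < cos d.
Hypothesis Htan : J * sin d = 2 * cos d.

Lemma bond_lower_bound w : - J <= - J * cos w.
Proof. pose proof (COS_bound w). nra. Qed.

(* [2 cos d] times the excess over the bound is [J] times a sum of two squares. *)
Lemma flop_pair_bound u v sg : sg * sg = 1 ->
  - (J * cos d + 2 * sin d) <= - J * cos (u - v) - 2 * sg * sin u + 2 * sg * cos d * sin v.
Proof.
  intros Hsg. rewrite cos_minus.
  pose proof (sin2_cos2 u) as Hu; pose proof (sin2_cos2 v) as Hv; pose proof (sin2_cos2 d) as Hd.
  unfold Rsqr in *.
  set (c := cos d) in *; set (s := sin d) in *.
  set (cu := cos u) in *; set (su := sin u) in *; set (cv := cos v) in *; set (sv := sin v) in *.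
  assert (Hsos : 2 * c * (- J * (cu * cv + su * sv) - 2 * sg * su + 2 * sg * c * sv + (J * c + 2 * s))
    = J * ((c * cv - cu) ^ 2 + (c * sv + sg * s - su) ^ 2)).
  { assert (J * (c * c) * (sv * sv + cv * cv) = J * (c * c)) by (rewrite Hv; ring).
    assert (J * (su * su + cu * cu) = J) by (rewrite Hu; ring).
    assert (J * (sg * sg) * (s * s) = J * (s * s)) by (rewrite Hsg; ring).
    assert ((J * s) * (sg * (c * sv - su) + s) = 2 * c * (sg * (c * sv - su) + s)) by (rewrite Htan; ring).
    assert (J * (s * s + c * c) = J) by (rewrite Hd; ring).
    lra. }
  assert (0 <= J * ((c * cv - cu) ^ 2 + (c * sv + sg * s - su) ^ 2)) by
    (apply Rmult_le_pos; [lra | apply Rplus_le_le_0_compat; apply pow2_ge_0]).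
  nra.
Qed.

Lemma cell_energy_min_residue th a b : (0 <= a < 8)%Z -> (0 <= b < 8)%Z ->
  cell_energy J (gauge_x (cos d)) (gauge_y (cos d)) (mostly_east d) a b
  <= cell_energy J (gauge_x (cos d)) (gauge_y (cos d)) th a b.
Proof.
  intros Ha Hb. unfold cell_energy, bond, site_energy, gauge.
  generalize (th (a, b)) (th ((a + 1)%Z, b)) (th (a, (b + 1)%Z)); intros x y z.
  pose proof (bond_lower_bound (x - y)); pose proof (bond_lower_bound (x - z)).
  pose proof (flop_pair_bound x y 1 ltac:(ring)); pose proof (flop_pair_bound x y (-1) ltac:(ring)).
  pose proof (flop_pair_bound x z 1 ltac:(ring)); pose proof (flop_pair_bound x z (-1) ltac:(ring)).
  pose proof (flop_pair_bound y x 1 ltac:(ring)); pose proof (flop_pair_bound y x (-1) ltac:(ring)).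
  pose proof (flop_pair_bound z x 1 ltac:(ring)); pose proof (flop_pair_bound z x (-1) ltac:(ring)).
  rewrite <- (cos_neg (y - x)), <- (cos_neg (z - x)), !Ropp_minus_distr in *.
  destruct (Z_lt8_cases a Ha) as [-> | [-> | [-> | [-> | [-> | [-> | [-> | ->]]]]]]];
  destruct (Z_lt8_cases b Hb) as [-> | [-> | [-> | [-> | [-> | [-> | [-> | ->]]]]]]];
  unfold mostly_east, flop_cluster, gauge_x, gauge_y, hfield, even_contrib, in_even, s_pat; simpl;
  rewrite ?Rminus_0_r, ?Rminus_0_l, ?Rminus_diag, ?Ropp_involutive, ?cos_0, ?sin_0, ?cos_neg, ?sin_neg;
  lra.
Qed.

Lemma cell_energy_min th a b :
  cell_energy J (gauge_x (cos d)) (gauge_y (cos d)) (mostly_east d) a b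
  <= cell_energy J (gauge_x (cos d)) (gauge_y (cos d)) th a b.
Proof.
  rewrite (Z_div_mod_eq_full a 8), (Z_div_mod_eq_full b 8), !(Z.add_comm (8 * _)).
  rewrite (cell_energy_periodic _ _ _ _ (mostly_east d)), (cell_energy_periodic _ _ _ th
    (fun p => th ((fst p + 8 * (a / 8))%Z, (snd p + 8 * (b / 8))%Z)));
    auto using periodic_gauge_x, periodic_gauge_y.
  - apply cell_energy_min_residue; apply Z.mod_pos_bound; lia.
  - intros. symmetry. apply periodic_mostly_east.
Qed.

Lemma mostly_east_ground_state : ground_state J (mostly_east d).
Proof. apply (ground_state_of_cell_min J (gauge_x (cos d)) (gauge_y (cos d))), cell_energy_min. Qed.

End Tilt.

Lemma mostly_east_cos_pos d p : 0 < cos d -> 0 < cos (mostly_east d p).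
Proof.
  intros Hcos. unfold mostly_east.
  destruct (flop_cluster p); [destruct (Z.even _)|]; rewrite ?cos_neg, ?cos_0; lra.
Qed.

Theorem lemma1 (J : R) (HJ : 0 < J) :
  exists thME thMW : config,
    ground_state J thME /\ ground_state J thMW /\
    (exists i, inS i /\ (cos (thME i) <> cos (thMW i) \/ sin (thME i) <> sin (thMW i))) /\
    (forall i, inS i -> cos (thME i) = - cos (thMW i) /\ cos (thME i) <> 0).
Proof.
  destruct (tilt_angle_spec J HJ) as [d [Hcos Htan]].
  pose proof (mostly_east_ground_state J d HJ Hcos Htan) as Hgs.
  exists (mostly_east d), (mirror (mostly_east d)).
  assert (Hflip : forall p, cos (mirror (mostly_east d) p) = - cos (mostly_east d p))
    by (intros; apply cos_pi_minus).
  split; [exact Hgs|]. split; [exact (ground_state_mirror J _ Hgs)|]. split.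
  - exists (1%Z, 0%Z). split; [reflexivity|]. left.
    rewrite Hflip. pose proof (mostly_east_cos_pos d (1%Z, 0%Z) Hcos). lra.
  - intros i _. rewrite Hflip. pose proof (mostly_east_cos_pos d i Hcos). split; lra.
Qed.
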